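(* There is an absolute constant $c_0>0$ such that the following holds. Let $\mathcal D$ be a distribution on $\mathbb R^d\times\{\pm1\}$ whose $x$-marginal is $(3,L,R,\beta)$-well-behaved, let $w\in\mathbb R^d$ be a unit vector, $\rho\in(0,1]$, and $B=\{x:\langle x,w\rangle\in[\rho R/2,\rho R/\sqrt2]\}$. Let $v\in w^\perp$ and $t_1,t_2>0$ be such that $$\mathbb E_{(z,y)\sim\mathcal D_B^{\pi_w}}\big[\mathbf 1\{-t_1\le\langle v,z\rangle\le-t_2\}\,y\big]<-C'$$ for some $C'>0$. Define $T_w(x)=\frac{1}{\langle w,x\rangle}\mathbf 1\{x\in B,\ -t_1\le\langle v,\pi_w(x)\rangle\le-t_2\}$ (and $T_w(x)=0$ for $x\notin B$). Then $\mathbb E_{(x,y)\sim\mathcal D}[T_w(x)\,y\,\langle w,x\rangle]\le-c_0\,C'\,L\,R^3\rho$.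
   Context: For a unit vector $w$ and $x$ with $\langle w,x\rangle\ne0$, the perspective projection is $\pi_w(x)=\mathrm{proj}_{w^\perp}\big(x/\langle w,x\rangle\big)$, where $\mathrm{proj}_{w^\perp}$ is orthogonal projection onto $w^\perp=\{u:\langle u,w\rangle=0\}$. For a set $B$ and a map $q$, $\mathcal D_B$ is $\mathcal D$ conditioned on $x\in B$, and $\mathcal D_B^{q}$ is the distribution of $(q(x),y)$ for $(x,y)\sim\mathcal D_B$. For $k\in\mathbb Z_+$, $L,R>0$, $\beta\ge1$, a distribution $\mathcal D_x$ on $\mathbb R^d$ is $(k,L,R,\beta)$-well-behaved if (i) for every $k$-dimensional subspace $V$ the projection of $\mathcal D_x$ onto $V$ has a density $\gamma_V$ on $V$ with $\gamma_V(x)\ge L$ for all $x\in V$, $\|x\|_2\le R$; and (ii) for every unit vector $w$ and every $t>0$, $\Pr_{x\sim\mathcal D_x}[|\langle w,x\rangle|\ge t]\le\exp(1-t/\beta)$. *)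

From mathcomp Require Import all_boot all_order all_algebra.
From mathcomp Require Import all_classical all_reals all_analysis.
Set Implicit Arguments. Unset Strict Implicit. Unset Printing Implicit Defensive.
Import Order.TTheory GRing.Theory Num.Theory.
Local Open Scope ring_scope.
Local Open Scope classical_set_scope.

Section Defs.
Context {R : realType} {d : nat}.

Definition dotv (u x : 'rV[R]_d) : R := \sum_(i < d) u 0 i * x 0 i.

Definition proj_perp (w y : 'rV[R]_d) : 'rV[R]_d :=
  y - (dotv y w / dotv w w) *: w.

(* perspective projection pi_w(x) = proj_{w^perp}(x / <w,x>) *)
Definition persp (w x : 'rV[R]_d) : 'rV[R]_d :=
  proj_perp w ((dotv w x)^-1 *: x).

Definition leb3 := ((@lebesgue_measure R) \x lebesgue_measure \x lebesgue_measure)%E.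

Context {dm : measure_display} {T : measurableType dm} (P : probability T R).

(* the x-marginal (law of X under P) is (3,L,Rad,beta)-well-behaved.
   (i) a 3-dim subspace V is given by an orthonormal basis u1 u2 u3; the
   projection onto V in these (isometric) coordinates has a density gam
   w.r.t. Lebesgue measure on R^3, with gam >= L on the ball of radius Rad.
   (ii) exponential tails in every unit direction. *)
Definition well_behaved3 (X : T -> 'rV[R]_d) (L Rad beta : R) : Prop :=
  (forall u1 u2 u3 : 'rV[R]_d,
      dotv u1 u1 = 1 -> dotv u2 u2 = 1 -> dotv u3 u3 = 1 ->
      dotv u1 u2 = 0 -> dotv u1 u3 = 0 -> dotv u2 u3 = 0 ->
      exists gam : R * R * R -> R,
        measurable_fun setT gam /\ (forall p, 0 <= gam p) /\
        (forall A : set (R * R * R), measurable A ->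
           P ((fun t => (dotv u1 (X t), dotv u2 (X t), dotv u3 (X t))) @^-1` A)
           = (\int[leb3]_(p in A) (gam p)%:E)%E) /\
        (forall p : R * R * R,
           p.1.1 ^+ 2 + p.1.2 ^+ 2 + p.2 ^+ 2 <= Rad ^+ 2 -> L <= gam p))
  /\
  (forall w : 'rV[R]_d, dotv w w = 1 -> forall s : R, 0 < s ->
      (P [set t | (s <= `|dotv w (X t)|)%R] <= (expR (1 - s / beta)%R)%:E)%E).

Definition Ex (f : T -> R) : R := fine (\int[P]_t (f t)%:E)%E.

Definition Ex_cond (X : T -> 'rV[R]_d) (B : set 'rV[R]_d) (f : T -> R) : R :=
  Ex (fun t => (\1_B (X t)) * f t) / fine (P (X @^-1` B)).

End Defs.

Definition band {R : realType} {d : nat} (w : 'rV[R]_d) (rho Rad : R) : set 'rV[R]_d :=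
  [set x | rho * Rad / 2 <= dotv x w <= rho * Rad / Num.sqrt 2].

Definition slab {R : realType} {d : nat} (w v : 'rV[R]_d) (t1 t2 : R) : set 'rV[R]_d :=
  [set x | - t1 <= dotv v (persp w x) <= - t2].

Definition Tw {R : realType} {d : nat} (w v : 'rV[R]_d) (rho Rad t1 t2 : R)
  (x : 'rV[R]_d) : R :=
  (dotv w x)^-1 * \1_(band w rho Rad `&` slab w v t1 t2) x.

From mathcomp Require Import all_boot all_order all_algebra.
From mathcomp Require Import all_classical all_reals all_analysis.
Import Order.TTheory GRing.Theory Num.Theory.
Local Open Scope ring_scope.
Local Open Scope classical_set_scope.
From Stdlib Require Import Lia.
From mathcomp Require Import zify ring lra.
Set Implicit Arguments.
Unset Strict Implicit.
Unset Printing Implicit Defensive.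

(* On the band B = {x : <x,w> in [a,b]}, a = rho R/2, b = rho R/sqrt 2, the
   factor 1/<w,x> in T_w cancels against <w,x> (which is positive there), so
   T_w(x) y <w,x> = 1_B(x) 1_slab(x) y and the target expectation is exactly
   the numerator E[1_B 1_slab y] of the conditional expectation in the
   hypothesis.  Hence E[T_w y <w,x>] < -C' P(B), and it remains to bound the
   mass of the band from below:  complete w to an orthonormal triple
   (w,u2,u3) (possible as d >= 3), and use the density lower bound L of the
   projection onto span(w,u2,u3) on the box [a,b] x [-R/2,R/2]^2, which lies
   in B (first coordinate) and in the ball of radius R.  Its volume is
   (b - a) R^2 >= rho R^3/5, so P(B) >= L R^3 rho/5. *)

Section DotProduct.
Variables (R : realType) (d : nat).

Lemma dotvE (u x : 'rV[R]_d) : dotv u x = (u *m x^T) 0 0.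
Proof. by rewrite /dotv !mxE; apply: eq_bigr => i _; rewrite mxE. Qed.

Lemma dotvC (u x : 'rV[R]_d) : dotv u x = dotv x u.
Proof. by rewrite /dotv; apply: eq_bigr => i _; rewrite mulrC. Qed.

Lemma dotvZ (a : R) (u x : 'rV[R]_d) : dotv (a *: u) x = a * dotv u x.
Proof. by rewrite /dotv mulr_sumr; apply: eq_bigr => i _; rewrite mxE mulrA. Qed.

Lemma dotv_gt0 (u : 'rV[R]_d) : u != 0 -> 0 < dotv u u.
Proof.
move=> u0; have sq_ge0 i : 0 <= u 0 i * u 0 i by rewrite -expr2 sqr_ge0.
rewrite lt_def sumr_ge0 ?andbT //; apply/eqP => /eqP.
rewrite /dotv psumr_eq0 // => /allP uu0; move/eqP: u0; apply.
apply/matrixP => i j; rewrite (ord1 i) mxE.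
by have := uu0 j (mem_index_enum _); rewrite -expr2 sqrf_eq0 => /eqP.
Qed.

Lemma exists_unit_perp k (M : 'M[R]_(k, d)) : (k < d)%N ->
  exists u : 'rV[R]_d, dotv u u = 1 /\ M *m u^T = 0.
Proof.
move=> kd; have : kermx M^T != 0.
  apply/eqP => K0; have := mxrank_ker M^T; rewrite K0 mxrank0.
  have := rank_leq_col M^T; lia.
case/rowV0Pn => v /sub_kermxP vK v0.
have vv0 : 0 < dotv v v by apply: dotv_gt0.
exists ((Num.sqrt (dotv v v))^-1 *: v); split.
  rewrite dotvZ dotvC dotvZ mulrA -invfM -expr2 sqr_sqrtr ?ltW //.
  by rewrite mulVf // gt_eqF.
by rewrite linearZ /= -scalemxAr -[M *m _]trmxK trmx_mul trmxK vK trmx0 scaler0.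
Qed.

Lemma orthonormal_completion (w : 'rV[R]_d) : (3 <= d)%N ->
  exists u2 u3 : 'rV[R]_d, [/\ dotv u2 u2 = 1, dotv u3 u3 = 1,
    dotv w u2 = 0, dotv w u3 = 0 & dotv u2 u3 = 0].
Proof.
move=> d3.
have [u2 [u22 wu2]] := @exists_unit_perp 1 w ltac:(lia).
have [u3 [u33 wu2_u3]] := @exists_unit_perp (1 + 1) (col_mx w u2) ltac:(lia).
move: wu2_u3; rewrite mul_col_mx => /eqP; rewrite col_mx_eq0 => /andP[/eqP wu3 /eqP u2u3].
by exists u2, u3; split; rewrite // dotvE ?wu2 ?wu3 ?u2u3 mxE.
Qed.

End DotProduct.

Lemma leb3_box (R : realType) (a b c e f g : R) : a <= b -> c <= e -> f <= g ->
  leb3 (`[a, b] `*` `[c, e] `*` `[f, g]) = ((b - a) * (e - c) * (g - f))%:E.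
Proof.
move=> ab ce fg; have mI (x y : R) : measurable `[x, y] := measurable_itv _.
rewrite /leb3 product_measure1E //; last exact: measurableX.
rewrite [X in (X * _)%E]product_measure1E // /= !lebesgue_measure_itv /= !lte_fin.
have len (x y : R) : x <= y ->
    (if (x < y)%R then y%:E + (- x)%:E else 0%R) = (y - x)%:E.
  by rewrite le_eqVlt => /orP[/eqP->|->]; rewrite ?ltxx ?subrr.
by rewrite (len _ _ ab) (len _ _ ce) (len _ _ fg) -!EFinM.
Qed.

Lemma density_mass_lb (R : realType) (gam : R * R * R -> R)
  (mgam : measurable_fun setT gam) (gam_ge0 : forall p, 0 <= gam p)
  (A A' : set (R * R * R)) (mA : measurable A) (mA' : measurable A')
  (AA' : A `<=` A') (L : R) (L_ge0 : 0 <= L) (gamL : forall p, A p -> L <= gam p) :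
  (L%:E * leb3 A <= \int[leb3]_(p in A') (gam p)%:E)%E.
Proof.
have mg := (measurable_realfun.measurable_EFinP _ gam).2 mgam.
apply: (@le_trans _ _ (\int[leb3]_(p in A) (gam p)%:E)%E); last first.
  apply: ge0_subset_integral => //; first exact: measurable_funS mg.
  by move=> x _; rewrite lee_fin.
rewrite -(integral_cst leb3 mA); apply: ge0_le_integral => //.
exact: measurable_funS mg.
Qed.

Section BandGeometry.
Variables (R : realType) (rho Rad : R).
Hypotheses (rho_gt0 : 0 < rho) (rho_le1 : rho <= 1) (Rad_gt0 : 0 < Rad).

Let a := rho * Rad / 2.
Let b := rho * Rad / Num.sqrt 2.

Lemma inv_sqrt2_facts : ((Num.sqrt (2 : R))^-1) ^+ 2 = 1 / 2 /\
  7 / 10 <= (Num.sqrt (2 : R))^-1.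
Proof.
set q := (Num.sqrt (2 : R))^-1.
have s_gt0 : 0 < Num.sqrt (2 : R) by rewrite sqrtr_gt0.
have q_gt0 : 0 < q by rewrite invr_gt0.
have s2 : Num.sqrt (2 : R) ^+ 2 = 2 by rewrite sqr_sqrtr.
have q2 : q ^+ 2 * 2 = 1 by rewrite -[X in _ * X]s2 -exprMn mulVf ?gt_eqF ?expr1n.
split; [lra | nra].
Qed.

Lemma band_width : a <= b /\ rho * Rad / 5 <= b - a.
Proof.
have [_ q7] := inv_sqrt2_facts.
have rR : 0 <= rho * Rad by rewrite mulr_ge0 // ltW.
have := mulr_ge0 rR (_ : 0 <= (Num.sqrt 2)^-1 - 7 / 10); rewrite subr_ge0 => /(_ q7).
by rewrite /a /b; split; lra.
Qed.

Lemma band_box_in_ball (x y z : R) : a <= x <= b ->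
  - (Rad / 2) <= y <= Rad / 2 -> - (Rad / 2) <= z <= Rad / 2 ->
  x ^+ 2 + y ^+ 2 + z ^+ 2 <= Rad ^+ 2.
Proof.
move=> /andP[x1 x2] /andP[y1 y2] /andP[z1 z2].
have [q2 _] := inv_sqrt2_facts.
have a_gt0 : 0 < a by rewrite /a divr_gt0 // mulr_gt0.
have b2 : b ^+ 2 <= Rad ^+ 2 / 2.
  rewrite /b !exprMn q2.
  have rho2 : rho ^+ 2 <= 1 := exprn_ile1 2 (ltW rho_gt0) rho_le1.
  have : 0 <= (1 - rho ^+ 2) * Rad ^+ 2 by rewrite mulr_ge0 ?sqr_ge0 ?subr_ge0.
  lra.
have : x ^+ 2 <= b ^+ 2 by nra.
have : y ^+ 2 <= Rad ^+ 2 / 4 by nra.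
have : z ^+ 2 <= Rad ^+ 2 / 4 by nra.
lra.
Qed.

End BandGeometry.

Lemma band_mass (R : realType) (d : nat) (dm : measure_display)
  (T : measurableType dm) (P : probability T R) (X : T -> 'rV[R]_d)
  (L Rad beta : R) (w : 'rV[R]_d) (rho : R) :
  (3 <= d)%N -> 0 < L -> 0 < Rad -> well_behaved3 P X L Rad beta ->
  dotv w w = 1 -> 0 < rho -> rho <= 1 ->
  (((L * Rad ^+ 3 * rho) / 5)%:E <= P (X @^-1` band w rho Rad))%E.
Proof.
move=> d3 L_gt0 Rad_gt0 [density _] ww rho_gt0 rho_le1.
have [ab width] := band_width rho_gt0 Rad_gt0.
set a := rho * Rad / 2 in ab width *; set b := rho * Rad / Num.sqrt 2 in ab width *.
have [u2 [u3 [u22 u33 wu2 wu3 u2u3]]] := orthonormal_completion w d3.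
have [gam [mgam [gam_ge0 [lawX gamL]]]] := density w u2 u3 ww u22 u33 wu2 wu3 u2u3.
have mI (x y : R) : measurable `[x, y] := measurable_itv _.
pose box := `[a, b] `*` `[- (Rad / 2), Rad / 2] `*` `[- (Rad / 2), Rad / 2].
pose slice := `[a, b] `*` [set: R] `*` [set: R].
have band_slice : X @^-1` band w rho Rad =
    (fun t => (dotv w (X t), dotv u2 (X t), dotv u3 (X t))) @^-1` slice.
  apply/seteqP; split => t /=; rewrite /band /slice /= in_itv /= dotvC //.
  by case=> [[]].
have box_slice : box `<=` slice by move=> [[x y] z] [[]].
have gam_box p : box p -> L <= gam p.
  case: p => [[x y] z] [[]]; rewrite /= !in_itv /= => xI yI zI.
  exact/gamL/(band_box_in_ball rho_gt0 rho_le1 Rad_gt0).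
rewrite band_slice lawX; last by do 2?apply: measurableX => //; apply: mI.
apply: (le_trans _ (density_mass_lb mgam gam_ge0 _ _ box_slice (ltW L_gt0) gam_box));
  last 2 first.
- by do 2?apply: measurableX => //; apply: mI.
- by do 2?apply: measurableX => //; apply: mI.
have half : - (Rad / 2) <= Rad / 2 by lra.
rewrite leb3_box // -EFinM lee_fin.
have := ler_wpM2r (ltW (mulr_gt0 (mulr_gt0 Rad_gt0 Rad_gt0) L_gt0)) width.
lra.
Qed.

(* On the band <w,x> > 0, so the factor 1/<w,x> of T_w cancels:
   T_w(x) y <w,x> = 1_B(x) 1_slab(x) y. *)
Lemma Tw_weight_cancel (R : realType) (d : nat) (w v x : 'rV[R]_d)
  (rho Rad t1 t2 y : R) : 0 < rho -> 0 < Rad ->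
  Tw w v rho Rad t1 t2 x * y * dotv w x =
  \1_(band w rho Rad) x * (\1_(slab w v t1 t2) x * y).
Proof.
move=> rho_gt0 Rad_gt0; rewrite /Tw !indicE in_setI.
have [/set_mem xB|] /= := boolP (x \in band w rho Rad); last by rewrite mulr0 !mul0r.
have wx_gt0 : 0 < dotv w x.
  case/andP: xB => lo _; rewrite dotvC (lt_le_trans _ lo) //.
  by rewrite divr_gt0 // mulr_gt0.
by rewrite mulrAC (mulrAC _^-1) mulVf ?gt_eqF // !mul1r.
Qed.

Lemma cond_mean_bound (R : realType) (E C' m : R) (pB : \bar R) :
  0 < C' -> 0 < m -> (m%:E <= pB)%E -> E / fine pB < - C' -> E <= - C' * m.
Proof.
move=> C'_gt0 m_gt0; case: pB => [p| |] //=; rewrite ?invr0 ?mulr0; last by lra.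
rewrite lee_fin => mp; rewrite ltr_pdivrMr ?(lt_le_trans m_gt0) //.
have := ler_wpM2l (ltW C'_gt0) mp; lra.
Qed.

Theorem mainTheorem8 :
  exists c0 : rat, 0 < c0 /\
  forall (R : realType) (d : nat) (dm : measure_display) (T : measurableType dm)
    (P : probability T R) (X : T -> 'rV[R]_d) (Y : T -> R)
    (L Rad beta : R) (w v : 'rV[R]_d) (rho t1 t2 C' : R),
    (3 <= d)%N ->
    (forall i : 'I_d, measurable_fun setT (fun t => X t 0 i)) ->
    measurable_fun setT Y ->
    (forall t, Y t = 1 \/ Y t = -1) ->
    0 < L -> 0 < Rad -> 1 <= beta ->
    well_behaved3 P X L Rad beta ->
    dotv w w = 1 ->
    0 < rho -> rho <= 1 ->
    dotv v w = 0 ->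
    0 < t1 -> 0 < t2 -> 0 < C' ->
    Ex_cond P X (band w rho Rad)
      (fun t => \1_(slab w v t1 t2) (X t) * Y t) < - C' ->
    Ex P (fun t => Tw w v rho Rad t1 t2 (X t) * Y t * dotv w (X t))
      <= - (ratr c0) * C' * L * Rad ^+ 3 * rho.
Proof.
exists 5%:R^-1; split; first by rewrite invr_gt0.
move=> R d dm T P X Y L Rad beta w v rho t1 t2 C' d3 _ _ _ L_gt0 Rad_gt0 _
  wellb ww rho_gt0 rho_le1 _ _ _ C'_gt0 cond_neg.
have mass := band_mass d3 L_gt0 Rad_gt0 wellb ww rho_gt0 rho_le1.
have mass_gt0 : 0 < L * Rad ^+ 3 * rho / 5 by rewrite divr_gt0 // !mulr_gt0 // exprn_gt0.
have weight t : Tw w v rho Rad t1 t2 (X t) * Y t * dotv w (X t) =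
    \1_(band w rho Rad) (X t) * (\1_(slab w v t1 t2) (X t) * Y t).
  exact: Tw_weight_cancel.
rewrite (funext weight) fmorphV rmorph_nat.
have -> : - 5^-1 * C' * L * Rad ^+ 3 * rho = - C' * (L * Rad ^+ 3 * rho / 5) by ring.
exact: cond_mean_bound C'_gt0 mass_gt0 mass cond_neg.
Qed.
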